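(* Let $X\in\mathcal L(V)$ be positive semidefinite with $r=\mathrm{rank}(X)$. Then for every irreducible type $\xi$, $A_\xi(X)\preceq r\,B_\xi(X)$ in the Loewner order. In particular, if $P$ is the orthogonal projector onto a $K$-dimensional subspace $\mathcal C\subseteq V$, then $A_\xi(P)\preceq K\,B_\xi(P)$.
   Context: Let $G$ be a group and $V$ a finite-dimensional complex Hilbert space with a unitary representation $\rho$ of $G$; $G$ acts on $\mathcal L(V)$ by conjugation, unitarily for $\langle X_1,X_2\rangle=\mathrm{Tr}(X_1^\dagger X_2)$. Let $\mathcal L(V)=\bigoplus_\xi\mathcal E_\xi$ be the isotypic decomposition, $m_\xi$ the multiplicity and $d_\xi$ the dimension of type $\xi$. Choose an orthogonal decomposition $\mathcal E_\xi=\bigoplus_{\alpha=1}^{m_\xi}\mathcal E_{\xi\alpha}$ into irreducibles, $G$-equivariant isometric isomorphisms $\phi^\xi_{1\alpha}:\mathcal E_{\xi1}\to\mathcal E_{\xi\alpha}$ ($\phi^\xi_{11}=\mathrm{id}$), an orthonormal basis $\{E_i^1\}_{i=1}^{d_\xi}$ of $\mathcal E_{\xi1}$, and put $E_i^\alpha=\phi^\xi_{1\alpha}(E_i^1)$. Matrix-valued enumerators: $[A_\xi(X)]_{\alpha\beta}=\sum_{i=1}^{d_\xi}\mathrm{Tr}(X^\dagger E_i^\beta)\mathrm{Tr}(X(E_i^\alpha)^\dagger)$ and $[B_\xi(X)]_{\alpha\beta}=\sum_{i=1}^{d_\xi}\mathrm{Tr}(X^\dagger(E_i^\alpha)^\dagger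 XE_i^\beta)$. For Hermitian matrices, $A\preceq B$ means $B-A$ is positive semidefinite. *)

From mathcomp Require Import all_boot all_order all_algebra.
From mathcomp Require Import reals complex.

Set Implicit Arguments.
Unset Strict Implicit.
Unset Printing Implicit Defensive.

Import Order.TTheory GRing.Theory Num.Theory.
Local Open Scope ring_scope.
Local Open Scope complex_scope.

Section Defs.
Variable R : realType.
Local Notation C := R[i].

Definition ctr p q (M : 'M[C]_(p, q)) : 'M[C]_(q, p) :=
  map_mx Num.conj (M^T).

Definition hs n (X1 X2 : 'M[C]_n) : C := \tr (ctr X1 *m X2).

Definition psd k (M : 'M[C]_k) : Prop :=
  ctr M = M /\ forall v : 'rV[C]_k, 0 <= (v *m M *m ctr v) 0 0.

Definition loewner_le k (A B : 'M[C]_k) : Prop := psd (B - A).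

Variable G : groupType.
Variable n : nat.
(* V = C^n with its standard inner product; L(V) = 'M[C]_n. *)
Variable rho : G -> 'M[C]_n.

Definition unitary_rep : Prop :=
  [/\ forall g h : G, rho (g * h)%g = rho g *m rho h,
      rho 1%g = 1%:M &
      forall g, rho g *m ctr (rho g) = 1%:M].

Definition conj_act (g : G) (X : 'M[C]_n) : 'M[C]_n := rho g *m X *m ctr (rho g).

Definition subspace (S : 'M[C]_n -> Prop) : Prop :=
  S 0 /\ forall (a : C) X Y, S X -> S Y -> S (a *: X + Y).

Definition invariant (S : 'M[C]_n -> Prop) : Prop :=
  forall g X, S X -> S (conj_act g X).

Definition irreducible (S : 'M[C]_n -> Prop) : Prop :=
  [/\ subspace S, invariant S, (exists X, S X /\ X <> 0) &
      forall T, subspace T -> invariant T -> (forall X, T X -> S X) ->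
        (forall X, T X -> X = 0) \/ (forall X, S X -> T X)].

Definition equiv_iso (S W : 'M[C]_n -> Prop) (psi : 'M[C]_n -> 'M[C]_n) : Prop :=
  [/\ forall (a : C) X Y, S X -> S Y -> psi (a *: X + Y) = a *: psi X + psi Y,
      forall X, S X -> W (psi X),
      forall Y, W Y -> (exists2 X, S X & psi X = Y),
      forall X Y, S X -> S Y -> psi X = psi Y -> X = Y &
      forall g X, S X -> psi (conj_act g X) = conj_act g (psi X)].

Definition isometric_on (S : 'M[C]_n -> Prop) (psi : 'M[C]_n -> 'M[C]_n) : Prop :=
  forall X Y, S X -> S Y -> hs (psi X) (psi Y) = hs X Y.

Definition isomorphic (S W : 'M[C]_n -> Prop) : Prop :=
  exists psi, equiv_iso S W psi.

(* The isotypic component of L(V) of the type of the irreducible S: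
   the subspace spanned by all irreducible subrepresentations W of L(V)
   isomorphic to S (i.e. the smallest subspace containing all of them). *)
Definition isotypic_component (S : 'M[C]_n -> Prop) (Y : 'M[C]_n) : Prop :=
  forall T, subspace T ->
    (forall W, irreducible W -> isomorphic S W -> forall X, W X -> T X) -> T Y.

(* The data fixed for one irreducible type xi, with multiplicity m.+1 and
   dimension d:  Es alpha = E_{xi,alpha} (alpha = ord0 plays the role of 1),
   phi alpha = phi^xi_{1 alpha}, e i = E_i^1. *)
Definition isotypic_data (m d : nat) (Es : 'I_m.+1 -> 'M[C]_n -> Prop)
    (phi : 'I_m.+1 -> 'M[C]_n -> 'M[C]_n) (e : 'I_d -> 'M[C]_n) : Prop :=
  [/\
      forall alpha, irreducible (Es alpha),
      forall alpha beta, alpha != beta ->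
        forall X Y, Es alpha X -> Es beta Y -> hs X Y = 0,
      (forall Y, isotypic_component (Es ord0) Y <->
        exists Ys : 'I_m.+1 -> 'M[C]_n,
          (forall alpha, Es alpha (Ys alpha)) /\ Y = \sum_alpha Ys alpha),
      (forall alpha, equiv_iso (Es ord0) (Es alpha) (phi alpha) /\
                    isometric_on (Es ord0) (phi alpha)) &
      forall X, Es ord0 X -> phi ord0 X = X] /\
      [/\ forall i, Es ord0 (e i),
          forall i j, hs (e i) (e j) = (i == j)%:R &
          forall Y, Es ord0 Y -> exists c : 'I_d -> C, Y = \sum_i c i *: e i].

Definition Ebasis m d (phi : 'I_m.+1 -> 'M[C]_n -> 'M[C]_n) (e : 'I_d -> 'M[C]_n)
    (alpha : 'I_m.+1) (i : 'I_d) : 'M[C]_n := phi alpha (e i).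

Definition Aenum m d (phi : 'I_m.+1 -> 'M[C]_n -> 'M[C]_n) (e : 'I_d -> 'M[C]_n)
    (X : 'M[C]_n) : 'M[C]_m.+1 :=
  \matrix_(alpha, beta)
    \sum_i \tr (ctr X *m Ebasis phi e beta i) * \tr (X *m ctr (Ebasis phi e alpha i)).

Definition Benum m d (phi : 'I_m.+1 -> 'M[C]_n -> 'M[C]_n) (e : 'I_d -> 'M[C]_n)
    (X : 'M[C]_n) : 'M[C]_m.+1 :=
  \matrix_(alpha, beta)
    \sum_i \tr (ctr X *m ctr (Ebasis phi e alpha i) *m X *m Ebasis phi e beta i).

End Defs.

From mathcomp Require Import all_boot all_order all_algebra.
From mathcomp Require Import reals complex.
From mathcomp Require Import sesquilinear spectral.
From mathcomp Require Import ring.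

(* Fix a basis index i and v in C^m, and put F = sum_b conj(v_b) E_i^b.  The
   i-th summands of v A_xi(X) v^* and v B_xi(X) v^* are |Tr(X F)|^2 and
   Tr(X F^* X F) for Hermitian X.  Writing X = U^* diag(d) U with d >= 0 and
   G = U F U^*, these are |sum_k d_k G_kk|^2 and sum_{k,l} d_k d_l |G_lk|^2,
   which dominates sum_k |d_k G_kk|^2.  Cauchy-Schwarz over the at most
   rank X indices with d_k <> 0 gives the bound; summing over i gives
   A_xi(X) <= rank X * B_xi(X), and a projector is PSD of rank K. *)

Set Implicit Arguments.
Unset Strict Implicit.
Unset Printing Implicit Defensive.

Import Order.TTheory GRing.Theory Num.Theory.
Local Open Scope ring_scope.
Local Open Scope sesquilinear_scope.

Lemma sqr_sum_le_card (R : numDomainType) (T : finType) (S : {pred T}) (x : T -> R) :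
  (forall i, x i \is Num.real) ->
  (\sum_(i in S) x i) ^+ 2 <= #|S|%:R * \sum_(i in S) x i ^+ 2.
Proof.
move=> x_real; set s := \sum_(i in S) x i; set q := \sum_(i in S) x i ^+ 2.
have sum_sqr_diff :
    \sum_(i in S) \sum_(j in S) (x i - x j) ^+ 2 = (#|S|%:R * q - s ^+ 2) *+ 2.
  under eq_bigr => i _.
    under eq_bigr => j _ do rewrite sqrrB.
    rewrite big_split sumrB /= sumr_const sumrMnl -mulr_sumr.
    over.
  rewrite big_split sumrB /= sumr_const !sumrMnl -mulr_suml -/s -/q.
  ring.
have : 0 <= \sum_(i in S) \sum_(j in S) (x i - x j) ^+ 2.
  by apply: sumr_ge0 => i _; apply: sumr_ge0 => j _; rewrite -realEsqr rpredB.
by rewrite sum_sqr_diff pmulrn_lge0 // subr_ge0.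
Qed.

Lemma card_support_le_rank_diag (F : fieldType) n (d : 'rV[F]_n) :
  (#|[set k | d ord0 k != 0%R]| <= \rank (diag_mx d))%N.
Proof.
set S := [set k | d ord0 k != 0].
pose L : 'M[F]_(#|S|, n) := \matrix_(j, k) (k == enum_val j)%:R.
pose N : 'M[F]_(n, #|S|) := \matrix_(k, j) ((k == enum_val j)%:R / d ord0 k).
have LDN : L *m diag_mx d *m N = 1%:M.
  apply/matrixP => j j'; rewrite -mulmxA mul_diag_mx !mxE.
  rewrite (bigD1 (enum_val j)) //= big1 ?addr0; last first.
    by move=> k /negPf k_j; rewrite !mxE k_j mul0r.
  have := enum_valP j; rewrite !mxE eqxx mul1r (inj_eq enum_val_inj) inE => d_nz.
  by case: eqP => _; rewrite ?mul0r ?mulr0 // mul1r mulfV.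
rewrite -[X in (X <= _)%N](mxrank1 F) -LDN.
by rewrite (leq_trans (mxrankM_maxl _ _)) // mxrankM_maxr.
Qed.

Section ComplexMatrices.
Variable C : numClosedFieldType.

Lemma trmxC_mul p q r (A : 'M[C]_(p, q)) (B : 'M[C]_(q, r)) :
  (A *m B) ^t* = B ^t* *m A ^t*.
Proof. by rewrite trmx_mul map_mxM. Qed.

Lemma trmxCZ p q a (M : 'M[C]_(p, q)) : (a *: M) ^t* = a^* *: M ^t*.
Proof. by rewrite linearZ /= map_mxZ. Qed.

Lemma trmxC_sum p q (I : finType) (F : I -> 'M[C]_(p, q)) :
  (\sum_i F i) ^t* = \sum_i (F i) ^t*.
Proof. by rewrite raddf_sum /= raddf_sum. Qed.

Lemma mxtrace_trmxC n (M : 'M[C]_n) : \tr (M ^t*) = (\tr M)^*.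
Proof. by rewrite trace_map_mx mxtrace_tr. Qed.

Lemma quad_formE m (v : 'rV[C]_m) (M : 'M[C]_m) :
  (v *m M *m v ^t*) 0 0 = \sum_a \sum_b v ord0 a * M a b * (v ord0 b)^*.
Proof.
rewrite mxE exchange_big; apply: eq_bigr => b _.
by rewrite [(v *m M) _ _]mxE big_distrl; apply: eq_bigr => a _; rewrite !mxE.
Qed.

Lemma mxtrace_diag_mul n (d : 'rV[C]_n) (M : 'M[C]_n) :
  \tr (diag_mx d *m M) = \sum_k d ord0 k * M k k.
Proof. by apply: eq_bigr => k _; rewrite mul_diag_mx mxE. Qed.

Lemma mxtrace_diag_sandwich n (d : 'rV[C]_n) (M : 'M[C]_n) :
  \tr (diag_mx d *m M ^t* *m diag_mx d *m M) =
  \sum_k \sum_l d ord0 k * d ord0 l * `|M l k| ^+ 2.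
Proof.
rewrite -!mulmxA; apply: eq_bigr => k _.
rewrite mul_diag_mx mxE [(_ *m _) k k]mxE mulr_sumr; apply: eq_bigr => l _.
by rewrite mul_diag_mx !mxE normCK; ring.
Qed.

Lemma mxtrace_lincomb n (I : finType) (L : 'M[C]_n) (y : I -> C) (Z : I -> 'M[C]_n) :
  \tr (L *m \sum_i y i *: Z i) = \sum_i y i * \tr (L *m Z i).
Proof.
by rewrite mulmx_sumr raddf_sum; apply: eq_bigr => i _; rewrite /= -scalemxAr mxtraceZ.
Qed.

Lemma mxtrace_bilincomb n (I J : finType) (L M : 'M[C]_n)
    (x : I -> C) (Y : I -> 'M[C]_n) (y : J -> C) (Z : J -> 'M[C]_n) :
  \tr (L *m (\sum_i x i *: Y i) *m M *m (\sum_j y j *: Z j)) =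
  \sum_i \sum_j x i * y j * \tr (L *m Y i *m M *m Z j).
Proof.
rewrite [L *m _]mulmx_sumr !mulmx_suml raddf_sum; apply: eq_bigr => i _ /=.
rewrite mxtrace_lincomb; apply: eq_bigr => j _.
by rewrite -scalemxAr -!scalemxAl mxtraceZ mulrCA mulrA.
Qed.

Lemma normsq_trace_diag_le n (d : 'rV[C]_n) (M : 'M[C]_n) :
  (forall k, 0 <= d ord0 k) ->
  `|\tr (diag_mx d *m M)| ^+ 2 <=
  (\rank (diag_mx d))%:R * \tr (diag_mx d *m M ^t* *m diag_mx d *m M).
Proof.
move=> d_ge0; set S := [set k | d ord0 k != 0].
rewrite mxtrace_diag_mul mxtrace_diag_sandwich.
set T := \sum_k \sum_l _.
have T_ge0 : 0 <= T.
  by apply: sumr_ge0 => k _; apply: sumr_ge0 => l _; rewrite !mulr_ge0 ?exprn_ge0.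
have diag_le_T : \sum_(k in S) `|d ord0 k * M k k| ^+ 2 <= T.
  apply: (@le_trans _ _ (\sum_k `|d ord0 k * M k k| ^+ 2)).
    rewrite [leLHS]big_mkcond; apply: ler_sum => k _.
    by case: ifP => _; rewrite ?lexx ?exprn_ge0.
  apply: ler_sum => k _; rewrite (bigD1 k) //= normrM ger0_norm // exprMn -expr2 lerDl.
  by apply: sumr_ge0 => l _; rewrite !mulr_ge0 ?exprn_ge0.
have -> : \sum_k d ord0 k * M k k = \sum_(k in S) d ord0 k * M k k.
  rewrite [RHS]big_mkcond; apply: eq_bigr => k _; rewrite inE.
  by case: eqP => [->|]; rewrite ?mul0r.
have norm_sum_le : `|\sum_(k in S) d ord0 k * M k k| ^+ 2 <=
                   (\sum_(k in S) `|d ord0 k * M k k|) ^+ 2.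
  by rewrite !expr2 ler_pM // ler_norm_sum.
apply: (le_trans norm_sum_le).
apply: (le_trans (@sqr_sum_le_card _ _ S _ (fun k => normr_real _))).
apply: (le_trans (ler_wpM2l (ler0n _ _) diag_le_T)).
by rewrite ler_wpM2r // ler_nat card_support_le_rank_diag.
Qed.

Lemma normsq_trace_psd_le n (X F : 'M[C]_n) :
  X ^t* = X -> (forall v : 'rV[C]_n, 0 <= (v *m X *m v ^t*) 0 0) ->
  `|\tr (X *m F)| ^+ 2 <= (\rank X)%:R * \tr (X *m F ^t* *m X *m F).
Proof.
move=> X_herm X_pos.
have X_normal : X \is normalmx by apply/normalmxP; rewrite X_herm.
have U_unitary := spectral_unitarymx X.
set U := spectralmx X in U_unitary *; set d := spectral_diag X.
have UU : U *m U ^t* = 1%:M := unitarymxP U_unitary.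
have eX : X = U ^t* *m diag_mx d *m U.
  by rewrite -invmx_unitary //; apply/orthomx_spectralP.
have eD : diag_mx d = U *m X *m U ^t*.
  by rewrite eX !mulmxA UU mul1mx -mulmxA UU mulmx1.
have d_ge0 k : 0 <= d ord0 k.
  pose v : 'rV[C]_n := 'e_k; have := X_pos (v *m U).
  have -> : v *m U *m X *m (v *m U) ^t* = v *m diag_mx d *m v ^t*.
    by rewrite eD trmxC_mul !mulmxA.
  rewrite /v.
  by rewrite trmx_delta map_delta_mx -rowE -colE !mxE eqxx mulr1n.
pose G := U *m F *m U ^t*.
have trXF : \tr (X *m F) = \tr (diag_mx d *m G).
  by rewrite /G eX -!mulmxA mxtrace_mulC -!mulmxA.
have trXFXF : \tr (X *m F ^t* *m X *m F) = \tr (diag_mx d *m G ^t* *m diag_mx d *m G).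
  by rewrite /G !trmxC_mul trmxCK eX -!mulmxA mxtrace_mulC -!mulmxA.
have rank_D : \rank (diag_mx d) = \rank X.
  rewrite eD mxrankMfree; last by rewrite row_free_unit unitarymx_unit ?trmxC_unitary.
  by rewrite (eqmxMfull _ (_ : row_full U)) // row_full_unit unitarymx_unit.
by rewrite trXF trXFXF -rank_D normsq_trace_diag_le.
Qed.

Section EnumeratorTerms.
Variables (n m : nat) (X : 'M[C]_n) (E : 'I_m -> 'M[C]_n).

Definition Aterm : 'M[C]_m :=
  \matrix_(a, b) (\tr (X ^t* *m E b) * \tr (X *m (E a) ^t*)).

Definition Bterm : 'M[C]_m :=
  \matrix_(a, b) \tr (X ^t* *m (E a) ^t* *m X *m E b).

Definition conj_comb (v : 'rV[C]_m) : 'M[C]_n := \sum_b (v ord0 b)^* *: E b.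

Lemma Aterm_hermitian : Aterm ^t* = Aterm.
Proof.
apply/matrixP => a b; rewrite !mxE rmorphM /= -!mxtrace_trmxC !trmxC_mul !trmxCK.
by rewrite mulrC; congr (_ * _); apply: mxtrace_mulC.
Qed.

Lemma Bterm_hermitian : X ^t* = X -> Bterm ^t* = Bterm.
Proof.
move=> X_herm; apply/matrixP => a b.
rewrite !mxE -mxtrace_trmxC !trmxC_mul !trmxCK X_herm.
by rewrite !mulmxA mxtrace_mulC !mulmxA.
Qed.

Lemma Aterm_quad_form v :
  (v *m Aterm *m v ^t*) 0 0 = `|\tr (X ^t* *m conj_comb v)| ^+ 2.
Proof.
have trF : \tr (X ^t* *m conj_comb v) = \sum_b (v ord0 b)^* * \tr (X ^t* *m E b).
  exact: mxtrace_lincomb.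
have trF_conj : (\tr (X ^t* *m conj_comb v))^* = \sum_a v ord0 a * \tr (X *m (E a) ^t*).
  rewrite trF rmorph_sum /=; apply: eq_bigr => a _.
  by rewrite rmorphM /= conjCK -mxtrace_trmxC trmxC_mul trmxCK mxtrace_mulC.
rewrite quad_formE normCK trF_conj trF [RHS]mulrC mulr_suml; apply: eq_bigr => a _.
by rewrite mulr_sumr; apply: eq_bigr => b _; rewrite mxE; ring.
Qed.

Lemma Bterm_quad_form v :
  (v *m Bterm *m v ^t*) 0 0 = \tr (X ^t* *m (conj_comb v) ^t* *m X *m conj_comb v).
Proof.
have -> : (conj_comb v) ^t* = \sum_a v ord0 a *: (E a) ^t*.
  by rewrite trmxC_sum; apply: eq_bigr => a _; rewrite trmxCZ conjCK.
rewrite quad_formE mxtrace_bilincomb; apply: eq_bigr => a _.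
by apply: eq_bigr => b _; rewrite mxE; ring.
Qed.

End EnumeratorTerms.

End ComplexMatrices.

Section LoewnerBounds.
Variable R : realType.
Local Notation C := R[i].

Lemma ctr_trmxC p q (M : 'M[C]_(p, q)) : ctr M = M ^t*.
Proof. by []. Qed.

Lemma psd0 k : psd (0 : 'M[C]_k).
Proof. by split=> [|v]; [rewrite ctr_trmxC linear0 map_mx0 | rewrite mulmx0 mul0mx mxE]. Qed.

Lemma psdD k (A B : 'M[C]_k) : psd A -> psd B -> psd (A + B).
Proof.
move=> [A_herm A_pos] [B_herm B_pos]; split.
  by rewrite ctr_trmxC linearD map_mxD /= -!ctr_trmxC A_herm B_herm.
by move=> v; rewrite mulmxDr mulmxDl mxE addr_ge0.
Qed.

Lemma loewner_le_sum k (I : finType) (A B : I -> 'M[C]_k) :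
  (forall i, loewner_le (A i) (B i)) -> loewner_le (\sum_i A i) (\sum_i B i).
Proof.
move=> AB; rewrite /loewner_le -sumrB.
by elim/big_ind: _ => [|? ?|i _]; [apply: psd0 | apply: psdD | apply: AB].
Qed.

Lemma projector_psd k (P : 'M[C]_k) : P *m P = P -> ctr P = P -> psd P.
Proof.
move=> P_idem P_herm; split=> // v; have P_herm' : P ^t* = P := P_herm.
have -> : v *m P *m ctr v = (v *m P) *m ctr (v *m P).
  by rewrite !ctr_trmxC trmxC_mul P_herm' mulmxA -[v *m P *m P]mulmxA P_idem.
by rewrite mxE; apply: sumr_ge0 => j _; rewrite ctr_trmxC !mxE -normCK exprn_ge0.
Qed.

Lemma Aterm_le_rank_Bterm n m (X : 'M[C]_n) (E : 'I_m -> 'M[C]_n) :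
  psd X -> loewner_le (Aterm X E) ((\rank X)%:R *: Bterm X E).
Proof.
move=> [X_herm X_pos]; have X_herm' : X ^t* = X := X_herm; split.
  by rewrite ctr_trmxC linearB /= map_mxB /= trmxCZ conjC_nat Aterm_hermitian Bterm_hermitian.
move=> v; set r : C := (\rank X)%:R.
have -> : (v *m (r *: Bterm X E - Aterm X E) *m ctr v) 0 0 =
    r * (v *m Bterm X E *m v ^t*) 0 0 - (v *m Aterm X E *m v ^t*) 0 0.
  by rewrite mulmxBr mulmxBl -scalemxAr -scalemxAl !mxE.
rewrite Aterm_quad_form Bterm_quad_form X_herm' subr_ge0.
exact: normsq_trace_psd_le.
Qed.

Section Enumerators.
Variables (n m d : nat) (phi : 'I_m.+1 -> 'M[C]_n -> 'M[C]_n) (e : 'I_d -> 'M[C]_n).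

Lemma Aenum_sum (X : 'M[C]_n) : Aenum phi e X = \sum_i Aterm X (Ebasis phi e ^~ i).
Proof. by apply/matrixP => a b; rewrite !mxE summxE; apply: eq_bigr => i _; rewrite mxE. Qed.

Lemma Benum_sum (X : 'M[C]_n) : Benum phi e X = \sum_i Bterm X (Ebasis phi e ^~ i).
Proof. by apply/matrixP => a b; rewrite !mxE summxE; apply: eq_bigr => i _; rewrite mxE. Qed.

Lemma Aenum_le_rank_Benum (X : 'M[C]_n) :
  psd X -> loewner_le (Aenum phi e X) ((\rank X)%:R *: Benum phi e X).
Proof.
move=> X_psd; rewrite Aenum_sum Benum_sum scaler_sumr.
by apply: loewner_le_sum => i; apply: Aterm_le_rank_Bterm.
Qed.

End Enumerators.

End LoewnerBounds.

Local Open Scope complex_scope.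

Theorem mainTheorem18 (R : realType) (G : groupType) (n : nat)
    (rho : G -> 'M[R[i]]_n) (m d : nat)
    (Es : 'I_m.+1 -> 'M[R[i]]_n -> Prop)
    (phi : 'I_m.+1 -> 'M[R[i]]_n -> 'M[R[i]]_n)
    (e : 'I_d -> 'M[R[i]]_n) :
  unitary_rep rho ->
  isotypic_data rho Es phi e ->
  (forall X : 'M[R[i]]_n, psd X ->
     loewner_le (Aenum phi e X) ((\rank X)%:R *: Benum phi e X)) /\
  (forall (K : nat) (P : 'M[R[i]]_n),
     P *m P = P -> ctr P = P -> \rank P = K ->
     loewner_le (Aenum phi e P) (K%:R *: Benum phi e P)).
Proof.
move=> _ _; split=> [X|K P P_idem P_herm <-]; first exact: Aenum_le_rank_Benum.
by apply: Aenum_le_rank_Benum; apply: projector_psd.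
Qed.
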